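(* For every odd integer $g\geqslant1$, $J_g^-=J_{g-1}^-$.
   Context: $\zeta_k^-\in\mathbb{C}[\alpha,\gamma]$: $\zeta^-_i=0$ for $i<0$, $\zeta^-_0=1$, $\zeta^-_{k+1}=\alpha\zeta^-_k-16k^2\zeta^-_{k-1}+2k(k-1)\gamma\zeta^-_{k-2}$ for $k$ odd and $\zeta^-_{k+1}=\alpha\zeta^-_k+2k(k-1)\gamma\zeta^-_{k-2}$ for $k$ even ($k\geqslant0$); $J^-_k$ is the ideal $(\zeta^-_k,\zeta^-_{k+1},\zeta^-_{k+2})$ of $\mathbb{C}[\alpha,\gamma]$. *)

From mathcomp Require Import all_boot all_algebra.
From mathcomp Require Import complex Rstruct.
Set Implicit Arguments. Unset Strict Implicit. Unset Printing Implicit Defensive.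
Import GRing.Theory.
Local Open Scope ring_scope.

Definition CC : Type := Rdefinitions.R[i].
Definition CAG : Type := {poly {poly CC}}.
Definition alpha : CAG := 'X.
Definition gamma : CAG := ('X)%:P.

(* zeta3 k = (zeta^-_k, zeta^-_{k-1}, zeta^-_{k-2}), with zeta^-_i = 0 for i < 0. *)
Fixpoint zeta3 (k : nat) : CAG * CAG * CAG :=
  match k with
  | O => (1, 0, 0)
  | S k' =>
      let '(z0, z1, z2) := zeta3 k' in
      let znew :=
        if odd k' then
          alpha * z0 - (16 * (k' ^ 2)%N)%:R * z1 + (2 * k' * (k'.-1))%N%:R * gamma * z2
        else
          alpha * z0 + (2 * k' * (k'.-1))%N%:R * gamma * z2 in
      (znew, z0, z1)
  end.

Definition zeta_minus (k : nat) : CAG := (zeta3 k).1.1.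

Definition in_J_minus (k : nat) (p : CAG) : Prop :=
  exists a b c : CAG,
    p = a * zeta_minus k + b * zeta_minus k.+1 + c * zeta_minus k.+2.

(* The inclusion J_g <= J_(g-1) is the recurrence for zeta_(g+2); the content
   is zeta_(g-1) \in J_g.  Write g = 2m+1.  The recurrence gives
   gamma J_(2i) <= J_(2i+2) and gamma J_(2m) <= J_(2m+1), hence
   gamma^(m-i) zeta_(2i+2) \in J_(2m+1).  The combinations
   s_i = 4(2i+1) zeta_(2i) +- zeta_(2i+1) satisfy
     (4(2i+3) -+ alpha) s_(i+1) = +-4(i+1)(2i+3) gamma s_i - zeta_(2i+4),
   so by induction on i both products prod_(j<=m) (4(2j+1) -+ alpha) kill
   zeta_(2m) modulo J_(2m+1).  Their roots +-4(2j+1) in alpha are disjoint, so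
   the two products generate the unit ideal and zeta_(2m) \in J_(2m+1).  The
   integers divided by along the way are positive, hence units over C. *)

From HB Require Import structures.
From mathcomp Require Import all_boot all_algebra.
From mathcomp Require Import complex Rstruct.
From mathcomp Require Import ring.
Set Implicit Arguments. Unset Strict Implicit. Unset Printing Implicit Defensive.
Import GRing.Theory Num.Theory.
Local Open Scope ring_scope.

Section Ideal3.
Variable R : comPzRingType.
Implicit Types a b c p r u v x y z : R.

Definition ideal3 x y z p : Prop := exists a b c, p = a * x + b * y + c * z.

Lemma ideal3D x y z p q : ideal3 x y z p -> ideal3 x y z q -> ideal3 x y z (p + q).
Proof.
case=> a [b [c ->]] [a' [b' [c' ->]]].
by exists (a + a'), (b + b'), (c + c'); ring.
Qed.

Lemma ideal3Ml x y z r p : ideal3 x y z p -> ideal3 x y z (r * p).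
Proof. by case=> a [b [c ->]]; exists (r * a), (r * b), (r * c); ring. Qed.

Lemma ideal3N x y z p : ideal3 x y z p -> ideal3 x y z (- p).
Proof. by rewrite -mulN1r; apply: ideal3Ml. Qed.

Lemma ideal3B x y z p q : ideal3 x y z p -> ideal3 x y z q -> ideal3 x y z (p - q).
Proof. by move=> Ip Iq; apply: ideal3D => //; apply: ideal3N. Qed.

Lemma ideal3_gen1 x y z : ideal3 x y z x.
Proof. by exists 1, 0, 0; ring. Qed.

Lemma ideal3_gen2 x y z : ideal3 x y z y.
Proof. by exists 0, 1, 0; ring. Qed.

Lemma ideal3_gen3 x y z : ideal3 x y z z.
Proof. by exists 0, 0, 1; ring. Qed.

Lemma ideal3_mul_subset r x y z x' y' z' :
    ideal3 x' y' z' (r * x) -> ideal3 x' y' z' (r * y) -> ideal3 x' y' z' (r * z) ->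
  forall p, ideal3 x y z p -> ideal3 x' y' z' (r * p).
Proof.
move=> Ix Iy Iz _ [a [b [c ->]]].
have -> : r * (a * x + b * y + c * z) = a * (r * x) + b * (r * y) + c * (r * z) by ring.
by apply: ideal3D; [apply: ideal3D|]; apply: ideal3Ml.
Qed.

Lemma ideal3_subset x y z x' y' z' :
    ideal3 x' y' z' x -> ideal3 x' y' z' y -> ideal3 x' y' z' z ->
  forall p, ideal3 x y z p -> ideal3 x' y' z' p.
Proof.
move=> Ix Iy Iz p Ip; rewrite -[p]mul1r.
by apply: (ideal3_mul_subset _ _ _ Ip); rewrite mul1r.
Qed.

Definition comaximal u v := exists s t, s * u + t * v = 1.

Lemma comaximal_sym u v : comaximal u v -> comaximal v u.
Proof. by case=> s [t uv1]; exists t, s; rewrite addrC. Qed.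

Lemma comaximalMr u v w : comaximal u v -> comaximal u w -> comaximal u (v * w).
Proof.
case=> s [t uv1] [s' [t' uw1]].
exists (s * s' * u + s * t' * w + t * s' * v), (t * t').
by rewrite -[1]mulr1 -{1}uv1 -uw1; ring.
Qed.

Lemma comaximal_prodr (I : Type) (rI : seq I) (P : pred I) (F : I -> R) u :
  (forall i, P i -> comaximal u (F i)) -> comaximal u (\prod_(i <- rI | P i) F i).
Proof.
move=> uF; apply: (big_ind (comaximal u)) => //; last exact: comaximalMr.
by exists 0, 1; ring.
Qed.

Lemma comaximal_prodl (I : Type) (rI : seq I) (P : pred I) (F : I -> R) v :
  (forall i, P i -> comaximal (F i) v) -> comaximal (\prod_(i <- rI | P i) F i) v.
Proof.
by move=> Fv; apply/comaximal_sym/comaximal_prodr => i /Fv /comaximal_sym.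
Qed.

Lemma ideal3_comaximal x y z u v p : comaximal u v ->
  ideal3 x y z (u * p) -> ideal3 x y z (v * p) -> ideal3 x y z p.
Proof.
case=> s [t uv1] Iup Ivp.
have -> : p = s * (u * p) + t * (v * p) by rewrite !mulrA -mulrDl uv1 mul1r.
by apply: ideal3D; apply: ideal3Ml.
Qed.

End Ideal3.

Section Ideal3Unit.
Variable R : comUnitRingType.
Implicit Types p u v x y z : R.

Lemma comaximal_add_unit u v : u + v \is a GRing.unit -> comaximal u v.
Proof. by move=> uvU; exists (u + v)^-1, (u + v)^-1; rewrite -mulrDr mulVr. Qed.

Lemma ideal3_unit_cancel x y z u p : u \is a GRing.unit ->
  ideal3 x y z (u * p) -> ideal3 x y z p.
Proof. by move=> uU /(ideal3Ml u^-1); rewrite mulKr. Qed.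

End Ideal3Unit.

HB.instance Definition _ := GRing.ComUnitRing.on CAG.

Local Notation Z := zeta_minus.
Local Notation J k := (ideal3 (Z k) (Z k.+1) (Z k.+2)).

Lemma natr_unit n : (0 < n)%N -> (n%:R : CAG) \is a GRing.unit.
Proof.
move=> n_gt0; have -> : (n%:R : CAG) = ((n%:R : CC)%:P)%:P by rewrite !rmorph_nat.
by do 2!apply: rmorph_unit; rewrite unitfE pnatr_eq0 -lt0n.
Qed.

Lemma zeta_minus_rec k : Z k.+3 =
  if odd k.+2 then
    alpha * Z k.+2 - (16 * k.+2 ^ 2)%:R * Z k.+1 + (2 * k.+2 * k.+1)%:R * gamma * Z k
  else alpha * Z k.+2 + (2 * k.+2 * k.+1)%:R * gamma * Z k.
Proof. by rewrite /zeta_minus /=; case: (zeta3 k) => [[a b] c]. Qed.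

Lemma zeta_minus_odd k : Z (k.*2).+3 =
  alpha * Z (k.*2).+2 + (2 * (k.*2).+2 * (k.*2).+1)%:R * gamma * Z k.*2.
Proof. by rewrite zeta_minus_rec /= odd_double. Qed.

Lemma zeta_minus_even k : Z (k.*2).+4 =
  alpha * Z (k.*2).+3 - (16 * (k.*2).+3 ^ 2)%:R * Z (k.*2).+2
  + (2 * (k.*2).+3 * (k.*2).+2)%:R * gamma * Z (k.*2).+1.
Proof. by rewrite zeta_minus_rec /= odd_double. Qed.

Lemma gamma_zeta_even_mem k x y z :
    ideal3 x y z (Z (k.*2).+2) -> ideal3 x y z (Z (k.*2).+3) ->
  ideal3 x y z (gamma * Z k.*2).
Proof.
move=> I2 I3; pose n := (2 * (k.*2).+2 * (k.*2).+1)%N.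
apply: (@ideal3_unit_cancel _ _ _ _ n%:R); first by apply: natr_unit; rewrite !muln_gt0.
have -> : n%:R * (gamma * Z k.*2) = Z (k.*2).+3 - alpha * Z (k.*2).+2.
  by rewrite /n zeta_minus_odd; ring.
by apply: ideal3B => //; apply: ideal3Ml.
Qed.

Lemma gamma_zeta_odd_mem k x y z :
    ideal3 x y z (Z (k.*2).+2) -> ideal3 x y z (Z (k.*2).+3) ->
    ideal3 x y z (Z (k.*2).+4) ->
  ideal3 x y z (gamma * Z (k.*2).+1).
Proof.
move=> I2 I3 I4; pose n := (2 * (k.*2).+3 * (k.*2).+2)%N.
apply: (@ideal3_unit_cancel _ _ _ _ n%:R); first by apply: natr_unit; rewrite !muln_gt0.
have -> : n%:R * (gamma * Z (k.*2).+1) =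
    Z (k.*2).+4 - alpha * Z (k.*2).+3 + (16 * (k.*2).+3 ^ 2)%:R * Z (k.*2).+2.
  by rewrite /n zeta_minus_even; ring.
by apply: ideal3D; [apply: ideal3B => //|]; apply: ideal3Ml.
Qed.

Lemma J_gamma_even k p : J k.*2 p -> J (k.*2).+2 (gamma * p).
Proof.
apply: ideal3_mul_subset; last by apply: ideal3Ml; apply: ideal3_gen1.
  by apply: gamma_zeta_even_mem; [apply: ideal3_gen1 | apply: ideal3_gen2].
by apply: gamma_zeta_odd_mem; [apply: ideal3_gen1 | apply: ideal3_gen2 | apply: ideal3_gen3].
Qed.

Lemma J_gamma_odd k p : J k.*2 p -> J (k.*2).+1 (gamma * p).
Proof.
apply: ideal3_mul_subset; last by apply: ideal3Ml; apply: ideal3_gen2.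
  by apply: gamma_zeta_even_mem; [apply: ideal3_gen2 | apply: ideal3_gen3].
by apply: ideal3Ml; apply: ideal3_gen1.
Qed.

Lemma J_gammaX k d p : J k.*2 p -> J (k + d).*2 (gamma ^+ d * p).
Proof.
move=> Jp; elim: d => [|d IH]; first by rewrite addn0 expr0 mul1r.
by rewrite addnS exprS -mulrA; apply: J_gamma_even.
Qed.

Lemma gammaX_zeta_J k d : J (k + d).*2.+1 (gamma ^+ d * Z (k.*2).+2).
Proof.
case: d => [|d]; first by rewrite addn0 expr0 mul1r; apply: ideal3_gen2.
rewrite exprS -mulrA addnS -addSn; apply: J_gamma_odd.
by apply: (@J_gammaX k.+1 d (Z k.*2.+2)); apply: ideal3_gen1.
Qed.

Definition lin_factor (b : bool) (j : nat) : CAG := (4 * (j.*2).+1)%:R - (-1) ^+ b * alpha.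

Definition zeta_comb (b : bool) (i : nat) : CAG :=
  (4 * (i.*2).+1)%:R * Z i.*2 + (-1) ^+ b * Z (i.*2).+1.

Lemma lin_factor_zeta_comb0 b : lin_factor b 0 * zeta_comb b 0 = - Z 2.
Proof. by rewrite /lin_factor /zeta_comb /zeta_minus /= double0; case: b; ring. Qed.

Lemma lin_factor_zeta_combS b i : lin_factor b i.+1 * zeta_comb b i.+1 =
  (-1) ^+ b * (4 * i.+1 * (i.*2).+3)%:R * gamma * zeta_comb b i - Z (i.*2).+4.
Proof.
rewrite /lin_factor /zeta_comb doubleS zeta_minus_even zeta_minus_odd.
by rewrite -!mul2n; case: b; ring.
Qed.

Lemma prod_lin_factor_zeta_comb_J b i d :
  J (i + d).*2.+1 ((\prod_(j < i.+1) lin_factor b j) * (gamma ^+ d * zeta_comb b i)).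
Proof.
elim: i d => [|i IH] d.
  rewrite big_ord1 mulrCA lin_factor_zeta_comb0 mulrN.
  by apply: ideal3N; apply: (gammaX_zeta_J 0).
rewrite big_ord_recr /= -mulrA [lin_factor _ _ * _]mulrCA lin_factor_zeta_combS.
set P := \prod_(j < i.+1) lin_factor b j.
have -> : P * (gamma ^+ d * ((-1) ^+ b * (4 * i.+1 * (i.*2).+3)%:R * gamma * zeta_comb b i
                            - Z (i.*2).+4)) =
    (-1) ^+ b * (4 * i.+1 * (i.*2).+3)%:R * (P * (gamma ^+ d.+1 * zeta_comb b i))
    - P * (gamma ^+ d * Z (i.+1).*2.+2) by rewrite exprS; ring.
apply: ideal3B; apply: ideal3Ml; first by rewrite addSnnS; apply: IH.
exact: gammaX_zeta_J.
Qed.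

Lemma prod_lin_factor_zeta_J b m :
  J (m.*2).+1 ((\prod_(j < m.+1) lin_factor b j) * Z m.*2).
Proof.
set P := \prod_(j < m.+1) lin_factor b j.
have := prod_lin_factor_zeta_comb_J b m 0; rewrite addn0 expr0 mul1r -/P => J_comb.
apply: (@ideal3_unit_cancel _ _ _ _ (4 * (m.*2).+1)%:R); first exact: natr_unit.
have -> : (4 * (m.*2).+1)%:R * (P * Z m.*2) =
    P * zeta_comb b m - (-1) ^+ b * (P * Z (m.*2).+1) by rewrite /zeta_comb; ring.
by apply: ideal3B => //; do 2!apply: ideal3Ml; apply: ideal3_gen1.
Qed.

Lemma lin_factors_comaximal m n :
  comaximal (\prod_(i < m) lin_factor false i) (\prod_(j < n) lin_factor true j).
Proof.
apply: comaximal_prodl => i _; apply: comaximal_prodr => j _.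
apply: comaximal_add_unit.
have -> : lin_factor false i + lin_factor true j = (4 * (i.*2).+1 + 4 * (j.*2).+1)%:R.
  by rewrite /lin_factor natrD; ring.
by apply: natr_unit; rewrite addn_gt0.
Qed.

Lemma zeta_even_J m : J (m.*2).+1 (Z m.*2).
Proof.
exact: ideal3_comaximal (lin_factors_comaximal m.+1 m.+1)
  (prod_lin_factor_zeta_J false m) (prod_lin_factor_zeta_J true m).
Qed.

Theorem corollary5p5 (g : nat) :
  odd g -> (1 <= g)%N ->
  forall p : CAG, in_J_minus g p <-> in_J_minus (g - 1) p.
Proof.
move=> g_odd _ p; have -> : g = (g./2).*2.+1 by rewrite -[LHS]odd_double_half g_odd.
rewrite subn1 /=.
split; apply: ideal3_subset.
- exact: ideal3_gen2.
- exact: ideal3_gen3.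
- rewrite zeta_minus_odd; apply: ideal3D; apply: ideal3Ml.
    exact: ideal3_gen3.
  exact: ideal3_gen1.
- exact: zeta_even_J.
- exact: ideal3_gen1.
- exact: ideal3_gen2.
Qed.
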